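(* Let $A=\sum_{j=1}^\infty E_j$, where $E_j$ are rank-one projections and the series converges in the strong operator topology. Let $\xi$ be a sequence whose entries consist of the entries of $\mu=\langle\mu_j\rangle_{j=1}^M$ and of $1-\lambda=\langle1-\lambda_j\rangle_{j=1}^N$ ($0\le M\le\infty$, $N=\infty$), where $0<\mu_j\le\frac12$ and $0<\lambda_j<\frac12$. If $\sum_{j=1}^\infty\lambda_j=\infty$, then $\xi\in\operatorname{Adm}(A)$.
   Context: $\operatorname{Adm}(A)$ is the set of sequences $\xi\in\ell^\infty_+$ such that $A=\sum_j\xi_jP_j$ for some rank-one projections $P_j$ (series converging in the strong operator topology if infinite); admissibility is invariant under permutation of the sequence. *)

From Stdlib Require Import Reals.
Open Scope R_scope.

Record C := mkC { re : R; im : R }.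
Definition Cadd (a b : C) : C := mkC (re a + re b) (im a + im b).
Definition Cmul (a b : C) : C :=
  mkC (re a * re b - im a * im b) (re a * im b + im a * re b).
Definition Cconj (a : C) : C := mkC (re a) (- im a).
Definition RtoC (r : R) : C := mkC r 0.

(** A complex Hilbert space (inner product linear in the first variable). *)
Record HilbertSpace := {
  vec :> Type;
  vzero : vec;
  vadd : vec -> vec -> vec;
  vopp : vec -> vec;
  vscal : C -> vec -> vec;
  inner : vec -> vec -> C;
  vadd_comm : forall x y, vadd x y = vadd y x;
  vadd_assoc : forall x y z, vadd x (vadd y z) = vadd (vadd x y) z;
  vadd_0 : forall x, vadd x vzero = x;
  vadd_opp : forall x, vadd x (vopp x) = vzero;
  vscal_1 : forall x, vscal (RtoC 1) x = x;
  vscal_assoc : forall a b x, vscal a (vscal b x) = vscal (Cmul a b) x;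
  vscal_addv : forall a x y, vscal a (vadd x y) = vadd (vscal a x) (vscal a y);
  vscal_adds : forall a b x, vscal (Cadd a b) x = vadd (vscal a x) (vscal b x);
  inner_add : forall x y z, inner (vadd x y) z = Cadd (inner x z) (inner y z);
  inner_scal : forall a x y, inner (vscal a x) y = Cmul a (inner x y);
  inner_conj : forall x y, inner y x = Cconj (inner x y);
  inner_pos : forall x, 0 <= re (inner x x);
  inner_def : forall x, inner x x = RtoC 0 -> x = vzero;
  complete : forall u : nat -> vec,
    (forall eps, 0 < eps -> exists N, forall m n, (N <= m)%nat -> (N <= n)%nat ->
        sqrt (re (inner (vadd (u m) (vopp (u n))) (vadd (u m) (vopp (u n))))) < eps) ->
    exists l, forall eps, 0 < eps -> exists N, forall n, (N <= n)%nat ->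
        sqrt (re (inner (vadd (u n) (vopp l)) (vadd (u n) (vopp l)))) < eps
}.

Arguments vzero {h}.
Arguments vadd {h}.
Arguments vopp {h}.
Arguments vscal {h}.
Arguments inner {h}.

Definition vnorm {H : HilbertSpace} (x : H) : R := sqrt (re (inner x x)).

Definition vlim {H : HilbertSpace} (u : nat -> H) (l : H) : Prop :=
  forall eps, 0 < eps -> exists N, forall n, (N <= n)%nat ->
    vnorm (vadd (u n) (vopp l)) < eps.

Fixpoint vpsum {H : HilbertSpace} (f : nat -> H) (n : nat) : H :=
  match n with
  | O => vzero
  | S k => vadd (vpsum f k) (f k)
  end.

Definition rank_one_proj {H : HilbertSpace} (P : H -> H) : Prop :=
  exists e : H, vnorm e = 1 /\ forall v, P v = vscal (inner v e) e.

Definition sot_sum {H : HilbertSpace} (c : nat -> R) (P : nat -> H -> H) (A : H -> H) : Prop :=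
  forall v, vlim (fun n => vpsum (fun j => vscal (RtoC (c j)) (P j v)) n) (A v).

Definition Adm {H : HilbertSpace} (A : H -> H) (xi : nat -> R) : Prop :=
  (forall j, 0 <= xi j) /\ (exists B, forall j, xi j <= B) /\
  exists P : nat -> H -> H, (forall j, rank_one_proj (P j)) /\ sot_sum xi P A.

(** Index set {j : j < M} of mu, with M = None standing for M = infinity. *)
Definition inM (M : option nat) (j : nat) : Prop :=
  match M with Some m => (j < m)%nat | None => True end.

(** xi consists of the entries of mu and of 1 - lambda (each exactly once),
    via a bijection sigma : nat -> (indices of mu) + (indices of lambda). *)
Definition merged (M : option nat) (mu lambda : nat -> R)
  (sigma : nat -> {j : nat | inM M j} + nat) (xi : nat -> R) : Prop :=
  (forall a b, sigma a = sigma b -> a = b) /\ (forall y, exists n, sigma n = y) /\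
  forall n, xi n = match sigma n with
                   | inl j => mu (proj1_sig j)
                   | inr j => 1 - lambda j
                   end.

From Pilot Require Import Defs.
From Stdlib Require Import Reals Lra Psatz Arith Classical ClassicalEpsilon.
Import Defs.
Open Scope R_scope.

(* Write E_j = <., e_j> e_j and place the weights xi_n greedily, keeping a residual vector
   g_n with |g_n|^2 < 1 and a count m_n such that
       sum_{j<n} xi_j P_j + <., g_n> g_n = sum_{j<m_n} E_j.
   If xi_n <= |g_n|^2, the rank-one piece xi_n P_n is split off along g_n; otherwise the next
   e_{m_n} is absorbed and the plane spanned by g_n and e_{m_n} is rotated so that one of the
   two rotated vectors has squared norm xi_n.  The new residual then contains g_n with a
   coefficient of square 1 - t_n, where t_n >= 1 - xi_n, so |<v, g_n>|^2 contracts by the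
   factor 1 - t_n/2 up to a multiple of |<v, e_{m_n}>|^2.  Bookkeeping of |g_n|^2 shows that
   2 sum t_n dominates the sum of the 1 - xi_n over xi_n > 1/2, i.e. of the lambda_j, which
   diverges.  Hence <v, g_n> -> 0 and m_n -> oo. *)

Fixpoint psum (f : nat -> R) (n : nat) : R :=
  match n with O => 0 | S k => psum f k + f k end.

Lemma psum_growing f : (forall k, 0 <= f k) -> Un_growing (psum f).
Proof. intros Hf n. simpl. pose proof (Hf n). lra. Qed.

Lemma psum_mono f n m : (forall k, 0 <= f k) -> (n <= m)%nat -> psum f n <= psum f m.
Proof. intros Hf. apply tech9, psum_growing, Hf. Qed.

Lemma psum_ge_term f n i : (forall k, 0 <= f k) -> (i < n)%nat -> f i <= psum f n.
Proof.
  intros Hf Hi. pose proof (psum_mono f (S i) n Hf Hi). pose proof (psum_mono f 0 i Hf (Nat.le_0_l i)).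
  simpl in *. lra.
Qed.

Lemma psum_le f g n : (forall k, f k <= g k) -> psum f n <= psum g n.
Proof. intros Hfg. induction n; simpl; [lra|]. pose proof (Hfg n). lra. Qed.

Lemma psum_ext f g n : (forall k, f k = g k) -> psum f n = psum g n.
Proof. intros Hfg. induction n; simpl; [reflexivity|]. rewrite IHn, Hfg. reflexivity. Qed.

Lemma psum_plus f g n : psum (fun k => f k + g k) n = psum f n + psum g n.
Proof. induction n; simpl; lra. Qed.

Lemma psum_div f r n : psum (fun k => f k / r) n = psum f n / r.
Proof. induction n; simpl; [unfold Rdiv; ring|]. rewrite IHn. unfold Rdiv. ring. Qed.

Lemma growing_unbounded_cv_infty u :
  Un_growing u -> (forall B, exists n, B <= u n) -> cv_infty u.
Proof.
  intros Hu Hub B. destruct (Hub (B + 1)) as [N HN]. exists N. intros n Hn.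
  pose proof (tech9 u Hu N n Hn). lra.
Qed.

Lemma cv_infty_le u w : (forall n, u n <= w n) -> cv_infty u -> cv_infty w.
Proof.
  intros Huw Hu B. destruct (Hu B) as [N HN]. exists N. intros n Hn.
  specialize (HN n Hn). specialize (Huw n). lra.
Qed.

(* The induction step of  prod_{i<k} (1 - a_i) <= 1 / (1 + sum_{i<k} a_i). *)
Lemma contraction_factor a T X : 0 <= a -> 0 <= T -> 0 <= X ->
  (1 - a) * (X / (1 + T)) <= X / (1 + (T + a)).
Proof.
  intros Ha HT HX. unfold Rdiv.
  apply (Rmult_le_reg_r ((1 + T) * (1 + (T + a)))); [nra|].
  replace ((1 - a) * (X * / (1 + T)) * ((1 + T) * (1 + (T + a))))
    with ((1 - a) * X * (1 + (T + a))) by (field; lra).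
  replace (X * / (1 + (T + a)) * ((1 + T) * (1 + (T + a)))) with (X * (1 + T)) by (field; lra).
  assert (0 <= X * (a * T + a * a)) by (apply Rmult_le_pos; nra). nra.
Qed.

Section PerturbedContraction.
Variables x tau D : nat -> R.
Hypothesis x_ge0 : forall n, 0 <= x n.
Hypothesis tau_01 : forall n, 0 <= tau n <= 1.
Hypothesis D_growing : Un_growing D.
Hypothesis x_rec : forall n, x (S n) <= (1 - tau n) * x n + (D (S n) - D n).

Lemma perturbed_contraction_unroll N k :
  x (k + N)%nat <= x N / (1 + (psum tau (k + N) - psum tau N)) + (D (k + N)%nat - D N).
Proof.
  induction k as [|k IH]; simpl.
  - replace (1 + (psum tau N - psum tau N)) with 1 by ring. unfold Rdiv. rewrite Rinv_1. lra.
  - set (T := psum tau (k + N) - psum tau N) in *.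
    assert (0 <= T).
    { pose proof (psum_mono tau N (k + N) (fun j => proj1 (tau_01 j)) ltac:(lia)). unfold T; lra. }
    replace (psum tau (k + N) + tau (k + N)%nat - psum tau N) with (T + tau (k + N)%nat)
      by (unfold T; ring).
    assert (D N <= D (k + N)%nat) by (apply tech9; [exact D_growing | lia]).
    pose proof (contraction_factor (tau (k + N)%nat) T (x N) ltac:(apply tau_01) ltac:(lra) (x_ge0 N)).
    pose proof (x_rec (k + N)). pose proof (tau_01 (k + N)). pose proof (x_ge0 (k + N)).
    nra.
Qed.

Lemma perturbed_contraction_cv0 : has_ub D -> cv_infty (psum tau) -> Un_cv x 0.
Proof.
  intros HDub Htau eps Heps.
  destruct (growing_cv D D_growing HDub) as [l Hl].
  destruct (Hl (eps/2) ltac:(lra)) as [N HN]. specialize (HN N (Nat.le_refl N)).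
  unfold R_dist in HN. apply Rabs_def2 in HN.
  destruct (Htau (psum tau N + 2 * x N / eps)) as [n0 Hn0].
  exists (max n0 N). intros n Hn.
  unfold R_dist. rewrite Rminus_0_r, Rabs_right by (apply Rle_ge, x_ge0).
  pose proof (perturbed_contraction_unroll N (n - N)) as Hun.
  replace (n - N + N)%nat with n in Hun by lia.
  pose proof (growing_ineq D l D_growing Hl n).
  specialize (Hn0 n ltac:(lia)).
  set (T := psum tau n - psum tau N) in *.
  assert (HT : 2 * x N / eps < T) by (unfold T; lra).
  assert (0 <= 2 * x N / eps)
    by (apply Rmult_le_pos; [pose proof (x_ge0 N); lra | apply Rlt_le, Rinv_0_lt_compat, Heps]).
  assert (x N / (1 + T) < eps / 2).
  { apply (Rmult_lt_reg_r (1 + T)); [lra|].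
    replace (x N / (1 + T) * (1 + T)) with (x N) by (field; lra).
    replace (2 * x N / eps) with (x N / (eps / 2)) in HT by (field; lra).
    apply (Rmult_lt_compat_l (eps/2)) in HT; [|lra].
    replace (eps / 2 * (x N / (eps / 2))) with (x N) in HT by (field; lra). nra. }
  lra.
Qed.

End PerturbedContraction.

Section CoveringSums.
Variables (w lam : nat -> R) (rho : nat -> option nat).
Hypothesis w_ge0 : forall k, 0 <= w k.
Hypothesis lam_ge0 : forall j, 0 <= lam j.
Hypothesis lam_le_w : forall k j, rho k = Some j -> lam j <= w k.
Hypothesis rho_onto : forall j, exists k, rho k = Some j.

Definition cover_upto (J k : nat) : R :=
  match rho k with Some j => if le_dec j J then lam j else 0 | None => 0 end.

Lemma cover_upto_ge0 J k : 0 <= cover_upto J k.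
Proof. unfold cover_upto. destruct (rho k) as [j|]; [destruct (le_dec j J)|]; auto; lra. Qed.

Definition cover_at (J k : nat) : R :=
  match rho k with Some j => if Nat.eq_dec j J then lam j else 0 | None => 0 end.

Lemma cover_upto_S J k : cover_upto (S J) k = cover_upto J k + cover_at (S J) k.
Proof.
  unfold cover_upto, cover_at. destruct (rho k) as [j|]; [|lra].
  destruct (le_dec j (S J)), (le_dec j J), (Nat.eq_dec j (S J)); try lia; lra.
Qed.

Lemma cover_upto_le_w J k : cover_upto J k <= w k.
Proof.
  unfold cover_upto. destruct (rho k) as [j|] eqn:Ek.
  - pose proof (lam_le_w k j Ek). pose proof (lam_ge0 j). destruct (le_dec j J); lra.
  - apply w_ge0.
Qed.

Lemma cover_upto_sum J : exists N, sum_f_R0 lam J <= psum (cover_upto J) N.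
Proof.
  induction J as [|J [N HN]].
  - destruct (rho_onto 0) as [k Hk]. exists (S k). simpl.
    pose proof (psum_mono (cover_upto 0) 0 k (cover_upto_ge0 0) (Nat.le_0_l k)). simpl in *.
    unfold cover_upto at 2. rewrite Hk. simpl. lra.
  - destruct (rho_onto (S J)) as [k Hk].
    assert (Hat : forall k, 0 <= cover_at (S J) k).
    { intro i. unfold cover_at. destruct (rho i) as [j|]; [destruct (Nat.eq_dec j (S J))|]; auto; lra. }
    exists (max N (S k)). simpl.
    rewrite (psum_ext _ (fun i => cover_upto J i + cover_at (S J) i)) by apply cover_upto_S.
    rewrite psum_plus.
    pose proof (psum_mono (cover_upto J) N (max N (S k)) (cover_upto_ge0 J) (Nat.le_max_l _ _)).
    pose proof (psum_ge_term (cover_at (S J)) (max N (S k)) k Hat ltac:(lia)) as Hterm.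
    unfold cover_at at 1 in Hterm. rewrite Hk in Hterm. destruct (Nat.eq_dec (S J) (S J)); [lra|lia].
Qed.

Lemma covering_sum_cv_infty : cv_infty (sum_f_R0 lam) -> cv_infty (psum w).
Proof.
  intros Hlam. apply growing_unbounded_cv_infty; [apply psum_growing, w_ge0|].
  intro B. destruct (Hlam B) as [J HJ]. specialize (HJ J (Nat.le_refl J)).
  destruct (cover_upto_sum J) as [N HN]. exists N.
  pose proof (psum_le _ _ N (cover_upto_le_w J)). lra.
Qed.

End CoveringSums.

Lemma iterate_choice {St : Type} (P : St -> Prop) (Rel : nat -> St -> St -> Prop) (s0 : St) :
  P s0 -> (forall n s, P s -> exists s', P s' /\ Rel n s s') ->
  exists f : nat -> St, f O = s0 /\ forall n, Rel n (f n) (f (S n)).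
Proof.
  intros H0 Hstep.
  assert (Hnext : forall n s, exists s', P s -> P s' /\ Rel n s s').
  { intros n s. destruct (classic (P s)) as [Hs|Hs].
    - destruct (Hstep n s Hs) as [s' Hs']. exists s'. auto.
    - exists s0. tauto. }
  set (next n s := proj1_sig (constructive_indefinite_description _ (Hnext n s))).
  assert (Hspec : forall n s, P s -> P (next n s) /\ Rel n s (next n s)).
  { intros n s. unfold next. destruct constructive_indefinite_description as [s' Hs']. exact Hs'. }
  set (f := fix f n := match n with O => s0 | S k => next k (f k) end).
  assert (HP : forall n, P (f n)) by (induction n; [exact H0 | apply Hspec, IHn]).
  exists f. split; [reflexivity|]. intro n. apply Hspec, HP.
Qed.

Arguments vadd_comm {h}.
Arguments vadd_assoc {h}.
Arguments vadd_0 {h}.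
Arguments vadd_opp {h}.
Arguments vscal_1 {h}.
Arguments vscal_assoc {h}.
Arguments vscal_addv {h}.
Arguments vscal_adds {h}.
Arguments inner_add {h}.
Arguments inner_scal {h}.
Arguments inner_conj {h}.
Arguments inner_pos {h}.

Lemma C_ext (a b : C) : re a = re b -> im a = im b -> a = b.
Proof. destruct a, b; simpl; intros -> ->; reflexivity. Qed.

Ltac C_ring := apply C_ext; unfold Cmul, Cadd, Cconj, RtoC; simpl; ring.

Definition Cnorm2 (z : C) : R := re z * re z + im z * im z.

Lemma Cnorm2_ge0 z : 0 <= Cnorm2 z.
Proof. unfold Cnorm2; nra. Qed.

Section HilbertAlgebra.
Context {H : HilbertSpace}.

Definition vnorm2 (x : H) : R := re (inner x x).

Lemma inner_add_r (x y z : H) : inner x (vadd y z) = Cadd (inner x y) (inner x z).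
Proof.
  rewrite inner_conj, inner_add, (inner_conj y x), (inner_conj z x). C_ring.
Qed.

Lemma inner_scal_r a (x y : H) : inner x (vscal a y) = Cmul (Cconj a) (inner x y).
Proof. rewrite inner_conj, inner_scal, (inner_conj y x). C_ring. Qed.

Lemma inner_scal_rR r (x y : H) : inner x (vscal (RtoC r) y) = Cmul (RtoC r) (inner x y).
Proof. rewrite inner_scal_r. f_equal. C_ring. Qed.

Lemma im_inner_self (x : H) : im (inner x x) = 0.
Proof. pose proof (f_equal im (inner_conj x x)) as E. simpl in E. lra. Qed.

Lemma vadd_cancel (x y z : H) : vadd x y = vadd x z -> y = z.
Proof.
  intro E. apply (f_equal (vadd (vopp x))) in E.
  rewrite !vadd_assoc, (vadd_comm (vopp x) x), vadd_opp, !(vadd_comm vzero), !vadd_0 in E.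
  exact E.
Qed.

Lemma vadd_rotate (x y z : H) : vadd (vadd x y) z = vadd (vadd x z) y.
Proof. rewrite <- !vadd_assoc, (vadd_comm y z). reflexivity. Qed.

Lemma vscal_0 (x : H) : vscal (RtoC 0) x = vzero.
Proof.
  apply (vadd_cancel (vscal (RtoC 0) x)).
  rewrite <- vscal_adds, vadd_0. f_equal. C_ring.
Qed.

Lemma vscal_zero_r a : vscal a (@vzero H) = vzero.
Proof.
  apply (vadd_cancel (vscal a vzero)). rewrite <- vscal_addv, !vadd_0. reflexivity.
Qed.

Lemma inner_zero_l (x : H) : inner vzero x = RtoC 0.
Proof. rewrite <- (vscal_0 vzero), inner_scal. C_ring. Qed.

Lemma vopp_scal (x : H) : vopp x = vscal (RtoC (-1)) x.
Proof.
  apply (vadd_cancel x). rewrite vadd_opp, <- (vscal_0 x).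
  rewrite <- (vscal_1 x) at 2. rewrite <- vscal_adds. f_equal. C_ring.
Qed.

Lemma vnorm2_ge0 (x : H) : 0 <= vnorm2 x.
Proof. apply inner_pos. Qed.

Lemma vnorm_sqr (x : H) : vnorm x * vnorm x = vnorm2 x.
Proof. apply sqrt_sqrt, inner_pos. Qed.

Definition lincomb (g e : H) (p q : R) : H := vadd (vscal (RtoC p) g) (vscal (RtoC q) e).

Lemma inner_lincomb v (g e : H) p q :
  inner v (lincomb g e p q) = Cadd (Cmul (RtoC p) (inner v g)) (Cmul (RtoC q) (inner v e)).
Proof. unfold lincomb. rewrite inner_add_r, !inner_scal_rR. reflexivity. Qed.

Lemma vnorm2_lincomb (g e : H) p q :
  vnorm2 (lincomb g e p q) = p*p*vnorm2 g + 2*p*q*re (inner g e) + q*q*vnorm2 e.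
Proof.
  unfold vnorm2, lincomb.
  rewrite !inner_add, !inner_add_r, !inner_scal, !inner_scal_rR.
  pose proof (f_equal re (inner_conj g e)). pose proof (im_inner_self g).
  pose proof (im_inner_self e). unfold Cmul, Cadd, Cconj, RtoC in *; simpl in *. nra.
Qed.

Lemma vnorm2_scal a (x : H) : vnorm2 (vscal a x) = Cnorm2 a * vnorm2 x.
Proof.
  unfold vnorm2, Cnorm2. rewrite inner_scal, inner_scal_r.
  pose proof (im_inner_self x). unfold Cmul, Cconj; simpl. nra.
Qed.

Lemma vnorm_vopp (x : H) : vnorm (vopp x) = vnorm x.
Proof.
  unfold vnorm. fold (vnorm2 (vopp x)) (vnorm2 x).
  rewrite vopp_scal, vnorm2_scal. unfold Cnorm2, RtoC; simpl. f_equal. ring.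
Qed.

Lemma Cauchy_Schwarz_re (x y : H) : Rabs (re (inner x y)) <= vnorm x * vnorm y.
Proof.
  assert (Hq : forall t, 0 <= vnorm2 x + 2*t*re (inner x y) + t*t*vnorm2 y).
  { intro t. pose proof (vnorm2_ge0 (lincomb x y 1 t)). rewrite vnorm2_lincomb in *. nra. }
  apply Rsqr_incr_0_var; [|apply Rmult_le_pos; apply sqrt_pos].
  rewrite <- Rsqr_abs. unfold Rsqr.
  replace (vnorm x * vnorm y * (vnorm x * vnorm y)) with (vnorm2 x * vnorm2 y)
    by (rewrite <- !vnorm_sqr; ring).
  pose proof (vnorm2_ge0 x). pose proof (vnorm2_ge0 y).
  set (a := vnorm2 x) in *. set (b := re (inner x y)) in *. set (c := vnorm2 y) in *.
  destruct (Req_dec c 0) as [Hc|Hc].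
  - destruct (Req_dec b 0) as [Hb|Hb]; [rewrite Hb, Hc; lra|].
    specialize (Hq (- (a + 1) / (2 * b))). rewrite Hc in Hq.
    replace (2 * (- (a + 1) / (2 * b)) * b) with (- (a + 1)) in Hq by (field; auto). nra.
  - specialize (Hq (- b / c)).
    replace (a + 2 * (- b / c) * b + - b / c * (- b / c) * c) with (a - b * b / c) in Hq
      by (field; auto).
    apply (Rmult_le_compat_r c) in Hq; [|lra].
    replace ((a - b * b / c) * c) with (a * c - b * b) in Hq by (field; auto). lra.
Qed.

Lemma vnorm_triangle (x y : H) : vnorm (vadd x y) <= vnorm x + vnorm y.
Proof.
  assert (0 <= vnorm x) by apply sqrt_pos. assert (0 <= vnorm y) by apply sqrt_pos.
  apply Rsqr_incr_0_var; [|lra]. unfold Rsqr.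
  rewrite vnorm_sqr.
  replace (vadd x y) with (lincomb x y 1 1) by (unfold lincomb; rewrite !vscal_1; reflexivity).
  rewrite vnorm2_lincomb, <- !vnorm_sqr.
  pose proof (Cauchy_Schwarz_re x y). pose proof (Rle_abs (re (inner x y))). nra.
Qed.

Lemma vpsum_ext (f g : nat -> H) n : (forall j, f j = g j) -> vpsum f n = vpsum g n.
Proof. intro Hfg. induction n; simpl; [reflexivity|]. rewrite IHn, Hfg. reflexivity. Qed.

End HilbertAlgebra.

Lemma rotation_angle c r x : 0 <= c < x -> x < 1 ->
  exists p q, p*p + q*q = 1 /\ p*p*c + 2*p*q*r + q*q = x /\ 1 - x <= p*p.
Proof.
  intros Hc Hx.
  set (s := if Rle_dec 0 r then 1 else -1).
  assert (Hs : s*s = 1 /\ 0 <= s*r) by (unfold s; destruct (Rle_dec 0 r); split; lra).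
  set (f := fun z => c*cos z*cos z + 2*(s*r)*cos z*sin z + sin z*sin z - x).
  assert (Hf : continuity f) by (unfold f; reg).
  destruct (IVT f 0 (PI/2) Hf) as [z [[Hz0 Hz1] Hz]].
  - pose proof PI2_RGT_0; lra.
  - unfold f. rewrite cos_0, sin_0. lra.
  - unfold f. rewrite cos_PI2, sin_PI2. lra.
  - exists (cos z), (s * sin z).
    pose proof (sin2_cos2 z) as Hsc. unfold Rsqr in Hsc.
    assert (0 <= cos z) by (apply cos_ge_0; pose proof PI2_RGT_0; lra).
    assert (0 <= sin z) by (apply sin_ge_0; pose proof PI2_RGT_0; pose proof PI_RGT_0; lra).
    unfold f in Hz. destruct Hs as [Hs Hsr].
    assert (0 <= cos z * cos z * c) by (apply Rmult_le_pos; nra).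
    assert (0 <= (s*r) * cos z * sin z) by (apply Rmult_le_pos; [apply Rmult_le_pos|]; lra).
    repeat split; nra.
Qed.

Section Dyads.
Context {H : HilbertSpace}.

Definition dyad (g v : H) : H := vscal (inner v g) g.

Lemma dyad_scal r (g v : H) : dyad (vscal (RtoC r) g) v = vscal (RtoC (r*r)) (dyad g v).
Proof. unfold dyad. rewrite inner_scal_rR, !vscal_assoc. f_equal. C_ring. Qed.

Lemma dyad_normalize (h : H) x : 0 < x -> vnorm2 h = x ->
  exists u, vnorm u = 1 /\ forall v, vscal (RtoC x) (dyad u v) = dyad h v.
Proof.
  intros Hx Hh. set (k := / sqrt x).
  assert (Hk : k*k*x = 1).
  { unfold k. rewrite <- Rinv_mult, sqrt_sqrt by lra. field. lra. }
  exists (vscal (RtoC k) h). split.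
  - unfold vnorm. fold (vnorm2 (vscal (RtoC k) h)).
    rewrite vnorm2_scal, Hh. unfold Cnorm2, RtoC; simpl.
    replace ((k*k + 0*0)*x) with (k*k*x) by ring. rewrite Hk. apply sqrt_1.
  - intro v. rewrite dyad_scal, vscal_assoc, <- vscal_1. f_equal.
    apply C_ext; unfold Cmul, RtoC; simpl; nra.
Qed.

Lemma dyad_rotation (g e v : H) p q : p*p + q*q = 1 ->
  vadd (dyad (lincomb g e p q) v) (dyad (lincomb g e (-q) p) v) = vadd (dyad g v) (dyad e v).
Proof.
  intro Hpq. unfold dyad. rewrite !inner_lincomb. unfold lincomb.
  rewrite !vscal_addv, !vscal_assoc, !vadd_assoc, (vadd_rotate _ (vscal _ e)).
  rewrite <- !vadd_assoc, <- !vscal_adds, !vadd_assoc, <- vscal_adds.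
  f_equal; f_equal; apply C_ext; unfold Cmul, Cadd, RtoC; simpl;
    match goal with |- _ = ?a => transitivity ((p*p + q*q) * a); [ring | rewrite Hpq; ring] end.
Qed.

Lemma Cnorm2_inner_scal v r (g : H) :
  Cnorm2 (inner v (vscal (RtoC r) g)) = r*r * Cnorm2 (inner v g).
Proof. rewrite inner_scal_rR. unfold Cnorm2, Cmul, RtoC; simpl. ring. Qed.

Lemma Cnorm2_inner_rotated v (g e : H) p q : p*p + q*q = 1 ->
  Cnorm2 (inner v (lincomb g e (-q) p))
    <= (1 - p*p/2) * Cnorm2 (inner v g) + 3 * Cnorm2 (inner v e).
Proof.
  intro Hpq. rewrite inner_lincomb. unfold Cnorm2, Cmul, Cadd, RtoC; simpl.
  set (a := re (inner v g)). set (b := im (inner v g)).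
  set (a' := re (inner v e)). set (b' := im (inner v e)).
  (* the difference is  (p a + 2 q a')^2/2 + (1 + p^2) a'^2  plus the same in b, b' *)
  pose proof (Rle_0_sqr (p*a + 2*q*a')). pose proof (Rle_0_sqr (p*b + 2*q*b')).
  pose proof (Rle_0_sqr a'). pose proof (Rle_0_sqr b'). unfold Rsqr in *. nra.
Qed.

Lemma split_off_step (g : H) x : 0 < x <= vnorm2 g ->
  exists u g', vnorm u = 1 /\ vnorm2 g' = vnorm2 g - x /\
    (forall v, vadd (vscal (RtoC x) (dyad u v)) (dyad g' v) = dyad g v) /\
    (forall v, Cnorm2 (inner v g') <= Cnorm2 (inner v g)).
Proof.
  intros Hx. set (c := vnorm2 g) in *.
  set (r := sqrt (x/c)). set (r' := sqrt (1 - x/c)).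
  assert (Hr : r*r = x/c) by (apply sqrt_sqrt, Rlt_le, Rdiv_lt_0_compat; lra).
  assert (Hr' : r'*r' = 1 - x/c).
  { apply sqrt_sqrt. apply (Rmult_le_reg_r c); [lra|]. field_simplify; lra. }
  destruct (dyad_normalize (vscal (RtoC r) g) x) as [u [Hu Hxu]]; [lra| |].
  { rewrite vnorm2_scal. unfold Cnorm2, RtoC; simpl. fold c. rewrite Rmult_0_l, Rplus_0_r, Hr.
    field. lra. }
  exists u, (vscal (RtoC r') g). split; [exact Hu|]. split; [|split].
  - rewrite vnorm2_scal. unfold Cnorm2, RtoC; simpl. fold c.
    rewrite Rmult_0_l, Rplus_0_r, Hr'. field. lra.
  - intro v. rewrite Hxu, !dyad_scal, <- vscal_adds, <- vscal_1.
    f_equal. apply C_ext; unfold Cadd, RtoC; simpl; lra.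
  - intro v. rewrite Cnorm2_inner_scal. pose proof (Cnorm2_ge0 (inner v g)).
    assert (0 <= x/c) by (apply Rlt_le, Rdiv_lt_0_compat; lra). nra.
Qed.

Lemma absorb_step (g e : H) x : vnorm2 e = 1 -> vnorm2 g < x < 1 ->
  exists u g' t, vnorm u = 1 /\ vnorm2 g' = vnorm2 g + 1 - x /\ 1 - x <= t <= 1 /\
    (forall v, vadd (vscal (RtoC x) (dyad u v)) (dyad g' v) = vadd (dyad g v) (dyad e v)) /\
    (forall v, Cnorm2 (inner v g') <= (1 - t/2) * Cnorm2 (inner v g) + 3 * Cnorm2 (inner v e)).
Proof.
  intros He Hx. pose proof (vnorm2_ge0 g).
  destruct (rotation_angle (vnorm2 g) (re (inner g e)) x) as [p [q [Hpq [Hnx Ht]]]]; [lra|lra|].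
  destruct (dyad_normalize (lincomb g e p q) x) as [u [Hu Hxu]]; [lra| |].
  { rewrite vnorm2_lincomb, He. lra. }
  exists u, (lincomb g e (-q) p), (p*p). split; [exact Hu|]. split; [|split; [|split]].
  - rewrite vnorm2_lincomb, He. nra.
  - pose proof (Rle_0_sqr q). unfold Rsqr in *. lra.
  - intro v. rewrite Hxu. apply dyad_rotation, Hpq.
  - intro v. apply Cnorm2_inner_rotated, Hpq.
Qed.

Lemma vnorm_dyad_le (g v : H) : vnorm2 g <= 1 ->
  vnorm (dyad g v) <= sqrt (Cnorm2 (inner v g)).
Proof.
  intro Hg. unfold vnorm. fold (vnorm2 (dyad g v)). unfold dyad. rewrite vnorm2_scal.
  apply sqrt_le_1_alt. pose proof (Cnorm2_ge0 (inner v g)). pose proof (vnorm2_ge0 g). nra.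
Qed.

End Dyads.

(** * The greedy construction *)

Section Greedy.
Context {H : HilbertSpace} (e : nat -> H).

Definition proj_psum (v : H) (m : nat) : H := vpsum (fun j => dyad (e j) v) m.
Definition coef_psum (v : H) (m : nat) : R := psum (fun j => Cnorm2 (inner v (e j))) m.

(* [emitted] and [gain] record the unit vector u_n and the contraction gain t_n produced by
   the step that led to the stage. *)
Record stage : Type := Stage { resid : H; used : nat; emitted : H; gain : R }.

(* Either x is split off the residual, or e (used s) is absorbed. *)
Definition greedy_step (x : R) (s s' : stage) : Prop :=
  vnorm (emitted s') = 1 /\ vnorm2 (resid s') < 1 /\
  ((used s' = used s /\ gain s' = 0 /\ vnorm2 (resid s') = vnorm2 (resid s) - x)
   \/ (used s' = S (used s) /\ 1 - x <= gain s' <= 1 /\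
       vnorm2 (resid s') = vnorm2 (resid s) + 1 - x)) /\
  (forall v, vadd (vadd (vscal (RtoC x) (dyad (emitted s') v)) (dyad (resid s') v))
                  (proj_psum v (used s))
             = vadd (dyad (resid s) v) (proj_psum v (used s'))) /\
  (forall v, Cnorm2 (inner v (resid s'))
             <= (1 - gain s' / 2) * Cnorm2 (inner v (resid s))
                + 3 * (coef_psum v (used s') - coef_psum v (used s))).

Hypothesis e_unit : forall j, vnorm2 (e j) = 1.

Lemma greedy_step_exists s x : vnorm2 (resid s) < 1 -> 0 < x < 1 ->
  exists s', greedy_step x s s'.
Proof.
  intros Hs Hx. destruct s as [g m u0 t0]; simpl in *.
  destruct (Rle_dec x (vnorm2 g)) as [Hxg|Hxg].
  - destruct (split_off_step g x ltac:(lra)) as [u [g' [Hu [Hg' [Hid Hest]]]]].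
    exists (Stage g' m u 0). unfold greedy_step; simpl.
    repeat split; [exact Hu | lra | left; repeat split; exact Hg' | |].
    + intro v. rewrite Hid. reflexivity.
    + intro v. specialize (Hest v). lra.
  - apply Rnot_le_lt in Hxg.
    destruct (absorb_step g (e m) x (e_unit m) ltac:(lra))
      as [u [g' [t [Hu [Hg' [Ht [Hid Hest]]]]]]].
    exists (Stage g' (S m) u t). unfold greedy_step; simpl.
    repeat split; [exact Hu | lra | right; split; [reflexivity | lra] | |].
    + intro v. unfold proj_psum. simpl. rewrite Hid, <- !vadd_assoc, (vadd_comm (dyad (e m) v)).
      reflexivity.
    + intro v. unfold coef_psum. simpl. specialize (Hest v). lra.
Qed.

Lemma greedy_run_exists (xi : nat -> R) : (forall n, 0 < xi n < 1) ->
  exists st : nat -> stage, resid (st O) = vzero /\ used (st O) = O /\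
    forall n, greedy_step (xi n) (st n) (st (S n)).
Proof.
  intros Hxi.
  destruct (iterate_choice (fun s => vnorm2 (resid s) < 1) (fun n => greedy_step (xi n))
              (Stage vzero O vzero 0)) as [st [H0 Hst]].
  - simpl. unfold vnorm2. rewrite inner_zero_l. simpl. lra.
  - intros n s Hs. destruct (greedy_step_exists s (xi n) Hs (Hxi n)) as [s' Hs'].
    exists s'. split; [apply Hs' | exact Hs'].
  - exists st. rewrite H0. auto.
Qed.

End Greedy.

Arguments stage : clear implicits.

Lemma re_inner_proj_psum {H : HilbertSpace} (e : nat -> H) v m :
  re (inner (proj_psum e v m) v) = coef_psum e v m.
Proof.
  induction m as [|m IH]; unfold proj_psum, coef_psum in *; simpl.
  - rewrite inner_zero_l. reflexivity.
  - rewrite inner_add. simpl. rewrite IH. unfold dyad. rewrite inner_scal, (inner_conj (e m) v).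
    unfold Cnorm2, Cmul, Cconj; simpl. ring.
Qed.

Lemma coef_psum_bounded {H : HilbertSpace} (e : nat -> H) v l :
  vlim (proj_psum e v) l -> has_ub (coef_psum e v).
Proof.
  intros Hl. destruct (Hl 1 ltac:(lra)) as [M HM].
  assert (Hgrow : Un_growing (coef_psum e v)) by (apply psum_growing; intro; apply Cnorm2_ge0).
  exists ((1 + vnorm l) * vnorm v). intros y [m ->].
  apply Rle_trans with (coef_psum e v (max m M)); [apply tech9; [exact Hgrow | lia]|].
  rewrite <- re_inner_proj_psum.
  eapply Rle_trans; [apply Rle_abs | eapply Rle_trans; [apply Cauchy_Schwarz_re|]].
  apply Rmult_le_compat_r; [apply sqrt_pos|].
  specialize (HM (max m M) ltac:(lia)). set (P := proj_psum e v (max m M)) in *.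
  replace P with (vadd (vadd P (vopp l)) l)
    by (rewrite <- vadd_assoc, (vadd_comm (vopp l)), vadd_opp, vadd_0; reflexivity).
  eapply Rle_trans; [apply vnorm_triangle|]. lra.
Qed.

(* The entries 1 - lambda_j of the paper are the x > 1/2, and excess x is their lambda_j. *)
Definition excess (x : R) : R := if Rlt_dec (1/2) x then 1 - x else 0.

Lemma excess_ge0 x : x < 1 -> 0 <= excess x.
Proof. unfold excess. destruct (Rlt_dec (1/2) x); lra. Qed.

Lemma excess_one_minus l : l < 1/2 -> excess (1 - l) = l.
Proof. unfold excess. destruct (Rlt_dec (1/2) (1 - l)); lra. Qed.

Section GreedyRun.
Context {H : HilbertSpace} (e : nat -> H) (xi : nat -> R) (st : nat -> stage H).
Hypothesis xi_01 : forall n, 0 < xi n < 1.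
Hypothesis run_resid0 : resid (st O) = vzero.
Hypothesis run_used0 : used (st O) = O.
Hypothesis run_step : forall n, greedy_step e (xi n) (st n) (st (S n)).

Definition emitted_psum (v : H) (n : nat) : H :=
  vpsum (fun j => vscal (RtoC (xi j)) (dyad (emitted (st (S j))) v)) n.

Lemma run_decomposition v n :
  vadd (emitted_psum v n) (dyad (resid (st n)) v) = proj_psum e v (used (st n)).
Proof.
  induction n as [|n IH].
  - unfold emitted_psum, proj_psum, dyad. rewrite run_resid0, run_used0. simpl.
    rewrite vscal_zero_r, vadd_0. reflexivity.
  - destruct (run_step n) as [_ [_ [_ [Hid _]]]]. specialize (Hid v).
    apply (vadd_cancel (dyad (resid (st n)) v)).
    rewrite <- Hid, <- IH. unfold emitted_psum at 1. simpl. fold (emitted_psum v n).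
    set (Sn := emitted_psum v n). set (X := vscal _ (dyad (emitted (st (S n))) v)).
    set (G := dyad (resid (st n)) v). set (G' := dyad (resid (st (S n))) v).
    symmetry. rewrite (vadd_comm (vadd X G')), (vadd_assoc (vadd Sn G) X G'), (vadd_rotate Sn G X),
      (vadd_rotate (vadd Sn X) G G'). apply vadd_comm.
Qed.

Lemma resid_vnorm2_lt1 n : vnorm2 (resid (st n)) < 1.
Proof.
  destruct n as [|n]; [|apply (run_step n)].
  unfold vnorm2. rewrite run_resid0, inner_zero_l. simpl. lra.
Qed.

Lemma used_growing n : (used (st n) <= used (st (S n)))%nat.
Proof. destruct (run_step n) as [_ [_ [[[-> _] | [-> _]] _]]]; lia. Qed.

Lemma gain_01 n : 0 <= gain (st (S n)) <= 1.
Proof. pose proof (xi_01 n). destruct (run_step n) as [_ [_ [[[_ [-> _]] | [_ [Ht _]]] _]]]; lra. Qed.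

Lemma excess_le_step n :
  excess (xi n) <= 2 * gain (st (S n)) + vnorm2 (resid (st n)) - vnorm2 (resid (st (S n))).
Proof.
  unfold excess. pose proof (xi_01 n).
  destruct (run_step n) as [_ [_ [[[_ [Ht Hc]] | [_ [Ht Hc]]] _]]];
    destruct (Rlt_dec (1/2) (xi n)); lra.
Qed.

Lemma psum_excess_le n :
  psum (fun k => excess (xi k)) n <= 2 * psum (fun k => gain (st (S k))) n.
Proof.
  assert (Hc : forall n, psum (fun k => excess (xi k)) n
                 <= 2 * psum (fun k => gain (st (S k))) n - vnorm2 (resid (st n))).
  { induction n0 as [|n0 IH]; simpl.
    - unfold vnorm2. rewrite run_resid0, inner_zero_l. simpl. lra.
    - pose proof (excess_le_step n0). lra. }
  pose proof (Hc n). pose proof (vnorm2_ge0 (resid (st n))). lra.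
Qed.

Lemma psum_gain_le_used n : psum (fun k => gain (st (S k))) n <= INR (used (st n)).
Proof.
  induction n as [|n IH]; simpl; [rewrite run_used0; simpl; lra|].
  destruct (run_step n) as [_ [_ [[[-> [-> _]] | [-> [Ht _]]] _]]].
  - lra.
  - rewrite S_INR. lra.
Qed.

Hypothesis excess_divergent : cv_infty (psum (fun k => excess (xi k))).

Lemma half_gain_divergent : cv_infty (psum (fun k => gain (st (S k)) / 2)).
Proof.
  apply (cv_infty_le (fun n => psum (fun k => excess (xi k)) n / 4)).
  - intro n. rewrite psum_div. pose proof (psum_excess_le n). lra.
  - intro B. destruct (excess_divergent (4 * B)) as [N HN]. exists N. intros n Hn.
    specialize (HN n Hn). lra.
Qed.

Lemma used_divergent : cv_infty (fun n => INR (used (st n))).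
Proof.
  apply (cv_infty_le (fun n => psum (fun k => gain (st (S k)) / 2) n)); [|exact half_gain_divergent].
  intro n. rewrite psum_div. pose proof (psum_gain_le_used n).
  pose proof (psum_mono (fun k => gain (st (S k))) 0 n (fun k => proj1 (gain_01 k)) (Nat.le_0_l n)).
  simpl in *. lra.
Qed.

Lemma resid_coef_cv0 v : has_ub (coef_psum e v) ->
  Un_cv (fun n => Cnorm2 (inner v (resid (st n)))) 0.
Proof.
  intros [B HB].
  assert (Hgrow : Un_growing (coef_psum e v)) by (apply psum_growing; intro; apply Cnorm2_ge0).
  apply (perturbed_contraction_cv0 _ (fun k => gain (st (S k)) / 2)
           (fun n => 3 * coef_psum e v (used (st n)))).
  - intro n. apply Cnorm2_ge0.
  - intro n. pose proof (gain_01 n). lra.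
  - intro n. pose proof (tech9 _ Hgrow _ _ (used_growing n)). lra.
  - intro n. destruct (run_step n) as [_ [_ [_ [_ Hest]]]]. specialize (Hest v). lra.
  - exists (3 * B). intros y [n ->]. pose proof (HB _ (ex_intro _ (used (st n)) eq_refl)). lra.
  - exact half_gain_divergent.
Qed.

Lemma emitted_psum_limit v l : vlim (proj_psum e v) l -> vlim (emitted_psum v) l.
Proof.
  intros Hl eps Heps.
  destruct (resid_coef_cv0 v (coef_psum_bounded e v l Hl) ((eps/2) * (eps/2)) ltac:(nra))
    as [N1 HN1].
  destruct (Hl (eps/2) ltac:(lra)) as [M HM].
  destruct (used_divergent (INR M)) as [N2 HN2].
  exists (max N1 N2). intros n Hn.
  set (G := dyad (resid (st n)) v).
  replace (vadd (emitted_psum v n) (vopp l))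
    with (vadd (vadd (proj_psum e v (used (st n))) (vopp l)) (vopp G))
    by (rewrite <- (run_decomposition v n), (vadd_rotate (emitted_psum v n)), <- vadd_assoc,
          vadd_opp, vadd_0; reflexivity).
  eapply Rle_lt_trans; [apply vnorm_triangle|]. rewrite vnorm_vopp.
  assert (vnorm (vadd (proj_psum e v (used (st n))) (vopp l)) < eps/2).
  { apply HM. apply INR_le, Rlt_le, HN2. lia. }
  assert (vnorm G < eps/2).
  { eapply Rle_lt_trans; [apply vnorm_dyad_le, Rlt_le, resid_vnorm2_lt1|].
    specialize (HN1 n ltac:(lia)). unfold R_dist in HN1. rewrite Rminus_0_r in HN1.
    rewrite <- (sqrt_Rsqr (eps/2)) by lra. apply sqrt_lt_1_alt. split; [apply Cnorm2_ge0|].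
    unfold Rsqr. pose proof (Rle_abs (Cnorm2 (inner v (resid (st n))))). lra. }
  lra.
Qed.

End GreedyRun.

Theorem Adm_of_excess_divergent (H : HilbertSpace) (A : H -> H) (E : nat -> H -> H)
  (xi : nat -> R) :
  (forall j, rank_one_proj (E j)) -> sot_sum (fun _ => 1) E A ->
  (forall n, 0 < xi n < 1) -> cv_infty (psum (fun k => excess (xi k))) ->
  Adm A xi.
Proof.
  intros HE HA Hxi Hexcess.
  destruct (choice _ HE) as [e He].
  assert (e_unit : forall j, vnorm2 (e j) = 1).
  { intro j. rewrite <- vnorm_sqr, (proj1 (He j)). ring. }
  destruct (greedy_run_exists e e_unit xi Hxi) as [st [Hres0 [Hused0 Hstep]]].
  split; [intro n; pose proof (Hxi n); lra|].
  split; [exists 1; intro n; pose proof (Hxi n); lra|].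
  exists (fun j => dyad (emitted (st (S j)))). split.
  - intro j. exists (emitted (st (S j))). split; [apply Hstep | reflexivity].
  - intro v. apply (emitted_psum_limit e xi st Hxi Hres0 Hused0 Hstep Hexcess).
    intros eps Heps. destruct (HA v eps Heps) as [N HN]. exists N. intros n Hn.
    unfold proj_psum. rewrite (vpsum_ext _ (fun j => vscal (RtoC 1) (E j v))); [apply HN, Hn|].
    intro j. rewrite vscal_1, (proj2 (He j)). reflexivity.
Qed.

Theorem lemma3p5 (H : HilbertSpace) (A : H -> H) (E : nat -> H -> H)
  (HE : forall j, rank_one_proj (E j))
  (HA : sot_sum (fun _ => 1) E A)
  (M : option nat) (mu lambda : nat -> R)
  (Hmu : forall j, inM M j -> 0 < mu j <= 1/2)
  (Hlam : forall j, 0 < lambda j < 1/2)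
  (Hdiv : cv_infty (fun n => sum_f_R0 lambda n))
  (sigma : nat -> {j : nat | inM M j} + nat) (xi : nat -> R)
  (Hxi : merged M mu lambda sigma xi) :
  Adm A xi.
Proof.
  destruct Hxi as [_ [Hsurj Hval]].
  assert (Hxi01 : forall n, 0 < xi n < 1).
  { intro n. rewrite Hval. destruct (sigma n) as [[j Hj]|j]; simpl.
    - pose proof (Hmu j Hj). lra.
    - pose proof (Hlam j). lra. }
  apply (Adm_of_excess_divergent H A E xi HE HA Hxi01).
  apply (covering_sum_cv_infty (fun k => excess (xi k)) lambda
           (fun k => match sigma k with inr j => Some j | inl _ => None end)).
  - intro k. apply excess_ge0, Hxi01.
  - intro j. pose proof (Hlam j). lra.
  - intros k j Hk. destruct (sigma k) as [i|i] eqn:Es; [discriminate|].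
    injection Hk as ->. rewrite Hval, Es, excess_one_minus by apply Hlam. lra.
  - intro j. destruct (Hsurj (inr j)) as [k Hk]. exists k. rewrite Hk. reflexivity.
  - exact Hdiv.
Qed.
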